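(* Let $D$ and $r$ be positive integers and let $p:\mathbb N\to\mathbb C$ be a quasi-polynomial $p(n)=d_{r-1}(n)n^{r-1}+\cdots+d_1(n)n+d_0(n)$, where each $d_m:\mathbb N\to\mathbb C$ is periodic with period $D$ and $d_{r-1}$ is not identically zero. Write $\sum_{n\geq 0}p(n)z^n=L(z)/M(z)$ in lowest terms with partial fraction decomposition $$\frac{L(z)}{M(z)}=\sum_{M(\lambda)=0}\sum_{\ell=1}^{m(\lambda)}\frac{c_{\lambda,\ell}}{(\lambda-z)^{\ell}},$$ where $m(\lambda)$ is the multiplicity of $\lambda$ as a root of $M$. Let $\gamma$ be a root of $M$. Then for each $1\leq m\leq m(\gamma)$, $$ c_{\gamma,m} = \gamma^{m}(m-1)! \sum_{\ell=m}^{m(\gamma)}(-1)^{\ell-m}\left\{ {\ell \atop m}\right\}\frac{1}{D}\sum_{v=0}^{D-1} \gamma^{v}d_{\ell-1}(v).$$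
   Context: For such $p$ the generating function $\sum_{n\ge0}p(n)z^n$ is a rational function; in lowest terms $L/M$ one has $\deg L<\deg M$ and every root $\lambda$ of $M$ satisfies $\lambda^D=1$. $\left\{ {\ell \atop m}\right\}$ denotes the Stirling number of the second kind (the number of partitions of an $\ell$-element set into $m$ nonempty blocks). *)

From HB Require Import structures.
From mathcomp Require Import all_boot all_order all_algebra all_field.
Set Implicit Arguments. Unset Strict Implicit. Unset Printing Implicit Defensive.
Import Order.TTheory GRing.Theory Num.Theory.

Definition stirling2 (l m : nat) : nat :=
  #|[set P : {set {set 'I_l}} | partition P [set: 'I_l] & #|P| == m]|.

From HB Require Import structures.
From mathcomp Require Import all_boot all_order all_algebra all_field.
From mathcomp Require Import cyclic ring zify.
Set Implicit Arguments. Unset Strict Implicit. Unset Printing Implicit Defensive.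
Import Order.TTheory GRing.Theory Num.Theory.

(* Expanding each D-periodic d_k over the D-th roots of unity w (discrete
   Fourier inversion), and n^k in the basis C(n + l, l) by means of Stirling
   numbers of the second kind, writes p(n) as a combination of the coefficients
   C(n + l, l) w^-(n+l+1) of 1/(w - z)^(l+1).  So sum_n p(n) z^n has denominator
   (1 - z^D)^r, and its partial fraction coefficients are given by the formula
   of the theorem with the sum over l running up to r instead of m(gamma).
   The same rational function is L/M, hence M divides (1 - z^D)^r, and the
   uniqueness of partial fraction expansions identifies the c_{w,l} with these
   coefficients.  Finally c_{gamma,l} = 0 for m(gamma) < l <= r; as the
   coefficients are triangular in the Fourier coefficients of the d_k, those
   with m(gamma) < l <= r vanish, which cuts the sum at m(gamma). *)

(** * Stirling numbers of the second kind *)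

Lemma card_in_bij (aT rT : finType) (X : {set aT}) (Y : {set rT})
    (f : aT -> rT) (g : rT -> aT) :
  {in X, forall a, f a \in Y} -> {in Y, forall b, g b \in X} ->
  {in X, cancel f g} -> {in Y, cancel g f} -> #|X| = #|Y|.
Proof.
move=> fXY gYX fK gK; have -> : Y = f @: X.
  apply/setP=> b; apply/idP/imsetP => [Yb | [a Xa ->]]; last exact: fXY.
  by exists (g b); rewrite ?gK ?gYX.
by rewrite card_in_imset //; apply: can_in_inj fK.
Qed.

Section Partitions.
Variable T : finType.
Implicit Types (A B : {set T}) (P : {set {set T}}).

Definition partitions A m := [set P | partition P A & #|P| == m].

Lemma set1_neq0 (y : T) : [set y] != set0.
Proof. by apply/set0Pn; exists y; rewrite set11. Qed.

Lemma disjoint_setD A B : [disjoint A & B :\: A].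
Proof. by rewrite disjoints_subset setDE setCI setCK subsetUr. Qed.

Lemma notin_partition_disjoint P A B :
  partition P A -> B != set0 -> [disjoint B & A] -> B \notin P.
Proof.
move=> partP B0 dBA; apply: contra B0 => BP.
by rewrite -(disjoint_setI0 dBA) (setIidPl (partitionS partP BP)).
Qed.

Lemma card_partitionU1 P A B :
  partition P A -> B != set0 -> [disjoint B & A] -> #|B |: P| = #|P|.+1.
Proof. by move=> partP B0 dBA; rewrite cardsU1 (notin_partition_disjoint partP). Qed.

Variables (A : {set T}) (x : T).
Hypothesis Ax : x \in A.

Lemma set1_notin_partitionD1 P : partition P (A :\ x) -> [set x] \notin P.
Proof.
move=> partP; apply: notin_partition_disjoint partP _ _; first exact: set1_neq0.
by rewrite disjoints1 setD11.
Qed.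

Lemma card_partitions_singleton m :
  #|[set P in partitions A m.+1 | [set x] \in P]| = #|partitions (A :\ x) m|.
Proof.
apply: (card_in_bij (f := fun P => P :\ [set x]) (g := fun P => [set x] |: P)).
- move=> P; rewrite !inE => /andP[/andP[partP /eqP cardP] xP].
  by rewrite partitionD1 //= -eqSS -cardP (cardsD1 [set x] P) xP.
- move=> P; rewrite !inE => /andP[partP /eqP cardP].
  have dxA : [disjoint [set x] & A :\ x] by rewrite disjoints1 setD11.
  rewrite (card_partitionU1 partP) ?set1_neq0 // cardP eqxx eqxx !andbT.
  by rewrite -{1}(setD1K Ax) partitionU1 ?set1_neq0.
- by move=> P; rewrite !inE => /andP[_ xP]; rewrite setD1K.
- by move=> P; rewrite inE => /andP[partP _]; rewrite setU1K ?set1_notin_partitionD1.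
Qed.

(* Removing x from its block maps a partition of A in which [set x] is not a
   block to a partition of A :\ x with a marked block; attach is the inverse. *)
Definition detach P := let X := pblock P x in ((X :\ x) |: (P :\ X), X :\ x).

Definition attach (PB : {set {set T}} * {set T}) := (x |: PB.2) |: (PB.1 :\ PB.2).

Definition marked_partitions m :=
  [set PB | (PB.1 \in partitions (A :\ x) m) && (PB.2 \in PB.1)].

Lemma card_marked_partitions m :
  #|marked_partitions m| = m * #|partitions (A :\ x) m|.
Proof.
rewrite mulnC -sum_nat_const (eq_bigr (fun P => \sum_(B in P) 1)); last first.
  by move=> P; rewrite inE => /andP[_ /eqP <-]; rewrite sum1_card.
by rewrite pair_big_dep -sum1_card; apply: eq_bigl => PB; rewrite inE.
Qed.

Section Detach.
Variable P : {set {set T}}.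
Hypotheses (partP : partition P A) (xnP : [set x] \notin P).
Let X := pblock P x.

Let XP : X \in P. Proof. by rewrite pblock_mem ?(cover_partition partP). Qed.
Let xX : x \in X. Proof. by rewrite mem_pblock (cover_partition partP). Qed.

Let XDx_neq0 : X :\ x != set0.
Proof.
apply: contra xnP => /eqP X1; suff <- : X = [set x] by [].
by rewrite -(setD1K xX) X1 setU0.
Qed.

Let partition_detach : partition (detach P).1 (A :\ x).
Proof.
have -> : A :\ x = (X :\ x) :|: (A :\: X).
  apply/setP => y; rewrite !inE; case: (y =P x) => [->|_] /=; first by rewrite xX.
  by case: (boolP (y \in X)) => //= /(subsetP (partitionS partP XP)).
apply: partitionU1; rewrite ?partitionD1 //.
exact: disjointWl (subD1set X x) (disjoint_setD X A).
Qed.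

Lemma detach_marked m : #|P| = m -> detach P \in marked_partitions m.
Proof.
move=> <-; rewrite inE /= setU11 inE partition_detach /= andbT.
rewrite (card_partitionU1 (partitionD1 partP XP)) // ?(cardsD1 X P) ?XP //.
exact: disjointWl (subD1set X x) (disjoint_setD X A).
Qed.

Lemma detachK : attach (detach P) = P.
Proof.
rewrite /attach /= setD1K // setU1K ?setD1K //.
apply: notin_partition_disjoint (partitionD1 partP XP) _ _ => //.
exact: disjointWl (subD1set X x) (disjoint_setD X A).
Qed.
End Detach.

Section Attach.
Variables (P : {set {set T}}) (B : {set T}).
Hypotheses (partP : partition P (A :\ x)) (BP : B \in P).

Let xB : x \notin B.
Proof. by apply/negP => /(subsetP (partitionS partP BP)); rewrite setD11. Qed.

Let xB_neq0 : x |: B != set0.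
Proof. by apply/set0Pn; exists x; rewrite setU11. Qed.

Let disjoint_attach : [disjoint x |: B & (A :\ x) :\: B].
Proof.
rewrite -setI_eq0; apply/eqP/setP => y; rewrite !inE.
case: (y =P x) => [-> | _]; rewrite ?eqxx ?andbF //=.
by case: (y \in B); rewrite ?andbF.
Qed.

Let xB_notin : x |: B \notin P :\ B.
Proof.
exact: notin_partition_disjoint (partitionD1 partP BP) xB_neq0 disjoint_attach.
Qed.

Let partition_attach : partition (attach (P, B)) A.
Proof.
have -> : A = (x |: B) :|: ((A :\ x) :\: B).
  apply/setP => y; rewrite !inE; case: (y =P x) => [-> // | _] /=.
  case: (boolP (y \in B)) => //= /(subsetP (partitionS partP BP)).
  by rewrite inE => /andP[_ ->].
exact: partitionU1 (partitionD1 partP BP) xB_neq0 disjoint_attach.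
Qed.

Lemma attach_partition m : #|P| = m ->
  attach (P, B) \in [set P in partitions A m | [set x] \notin P].
Proof.
move=> <-; rewrite inE /partitions inE partition_attach /attach /=.
rewrite (card_partitionU1 (partitionD1 partP BP)) // [#|P|](cardsD1 B) BP eqxx /=.
rewrite in_setU1 negb_or !inE negb_and (set1_notin_partitionD1 partP) orbT andbT.
have [y By] := set0Pn _ (partition_neq0 partP BP).
apply/eqP => /setP/(_ y); rewrite !inE By orbT => /eqP yx.
by move: xB; rewrite -yx By.
Qed.

Lemma attachK : detach (attach (P, B)) = (P, B).
Proof.
have pbx : pblock (attach (P, B)) x = x |: B.
  by apply: def_pblock; rewrite ?setU11 ?(partition_trivIset partition_attach).
by rewrite /detach pbx /= setU1K // setU1K // setD1K.
Qed.
End Attach.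

Lemma card_partitions_nonsingleton m :
  #|[set P in partitions A m | [set x] \notin P]| = m * #|partitions (A :\ x) m|.
Proof.
rewrite -card_marked_partitions; apply: (card_in_bij (f := detach) (g := attach)).
- by move=> P /setIdP[/setIdP[partP /eqP cardP] xP]; apply: detach_marked.
- by move=> [P B] /setIdP[/setIdP[partP /eqP cardP] BP]; apply: attach_partition.
- by move=> P /setIdP[/setIdP[partP _] xP]; apply: detachK.
- by move=> [P B] /setIdP[/setIdP[partP _] BP]; apply: attachK.
Qed.

Lemma card_partitionsS m :
  #|partitions A m.+1| = #|partitions (A :\ x) m| + m.+1 * #|partitions (A :\ x) m.+1|.
Proof.
rewrite -card_partitions_singleton -card_partitions_nonsingleton.
rewrite -(cardsID [set P : {set {set T}} | [set x] \in P] (partitions A m.+1)).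
rewrite -setIdE; congr (_ + _).
by rewrite setDE -setIdE; apply: eq_card => P; rewrite !inE.
Qed.

End Partitions.

Fixpoint stirling2_rec (l m : nat) : nat :=
  match l, m with
  | 0, 0 => 1
  | 0, _.+1 | _.+1, 0 => 0
  | l.+1, m.+1 => stirling2_rec l m + m.+1 * stirling2_rec l m.+1
  end.

Lemma card_partitions (T : finType) (A : {set T}) m :
  #|partitions A m| = stirling2_rec #|A| m.
Proof.
move Al : #|A| => l; elim: l A m Al => [|l IH] A m.
  move/cards0_eq => ->; case: m => [|m] /=.
    rewrite -(cards1 (set0 : {set {set T}})); apply: eq_card => P.
    by rewrite !inE partition_set0 cards_eq0 andbb.
  apply/eqP; rewrite cards_eq0; apply/eqP/setP => P; rewrite !inE partition_set0.
  by case: eqP => [->|]; rewrite ?cards0.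
have [-> | [x Ax]] := set_0Vmem A; first by rewrite cards0.
rewrite (cardsD1 x) Ax add1n => -[Axl]; case: m => [|m].
  apply/eqP; rewrite cards_eq0; apply/eqP/setP => P; rewrite !inE cards_eq0.
  apply/negbTE; apply: contraL Ax => /andP[/cover_partition <- /eqP ->].
  by rewrite /cover big_set0 inE.
by rewrite (card_partitionsS Ax) !IH.
Qed.

Lemma stirling2E l m : stirling2 l m = stirling2_rec l m.
Proof. by rewrite -[l in RHS]card_ord -cardsT -card_partitions. Qed.

Lemma stirling2SS l m :
  stirling2 l.+1 m.+1 = stirling2 l m + m.+1 * stirling2 l m.+1.
Proof. by rewrite !stirling2E. Qed.

Lemma stirling2S0 l : stirling2 l.+1 0 = 0.
Proof. by rewrite stirling2E. Qed.

Lemma stirling2_small l m : l < m -> stirling2 l m = 0.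
Proof.
rewrite stirling2E; elim: l m => [|l IH] [|m] //= lm.
by rewrite !IH ?muln0 // ltnW.
Qed.

Lemma stirling2nn n : stirling2 n n = 1.
Proof.
elim: n => [|n IH]; first by rewrite stirling2E.
by rewrite stirling2SS IH stirling2_small ?muln0.
Qed.

Local Open Scope ring_scope.

Lemma triangular_exchange (R : nmodType) (F : nat -> nat -> R) r :
  \sum_(l < r) \sum_(l.+1 <= j < r.+1) F l j = \sum_(k < r) \sum_(l < k.+1) F l k.+1.
Proof.
elim: r => [|r IH]; first by rewrite !big_ord0.
rewrite big_ord_recr [RHS]big_ord_recr /= -IH big_nat1 [in RHS]big_ord_recr /=.
rewrite addrA; congr (_ + _); rewrite -big_split /=; apply: eq_bigr => l _.
by rewrite big_nat_recr //= ltnS ltnW.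
Qed.

Lemma natrX_stirling2 (R : comPzRingType) (n k : nat) :
  (n%:R : R) ^+ k =
  \sum_(l < k.+1) (-1) ^+ (k - l) * (stirling2 k.+1 l.+1)%:R * ((n + l) ^_ l)%:R.
Proof.
elim: k => [|k IH]; first by rewrite big_ord1 stirling2nn expr0 !mul1r ffactn0.
rewrite exprS IH; apply/esym.
pose t l := (-1) ^+ (k.+1 - l) * ((n + l) ^_ l)%:R : R.
transitivity (\sum_(l < k.+2) t l * (stirling2 k.+1 l)%:R
              + \sum_(l < k.+2) t l * (l.+1 * stirling2 k.+1 l.+1)%:R).
  rewrite -big_split; apply: eq_bigr => l _.
  by rewrite stirling2SS natrD /t /=; ring.
rewrite [X in X + _]big_ord_recl stirling2S0 mulr0 add0r.
rewrite [X in _ + X]big_ord_recr /= stirling2_small // muln0 mulr0 addr0.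
rewrite big_distrr -big_split /=; apply: eq_bigr => l _.
have lk : (l <= k)%N by rewrite -ltnS.
rewrite /t /bump /= add1n addnS ffactSS subSS subSn // exprS !natrM.
ring.
Qed.

(** * Power series and roots of unity *)

(* A power series is represented by its coefficient function f : nat -> R;
   conv A f is the coefficient function of its product with the polynomial A. *)
Section Convolution.
Variable R : comNzRingType.
Implicit Types (A B : {poly R}) (f g : nat -> R).

Definition conv A f n := \sum_(k < n.+1) A`_k * f (n - k)%N.

Lemma conv_coefM A B n : conv A (fun i => B`_i) n = (A * B)`_n.
Proof. by rewrite coefM. Qed.

Lemma eq_conv A f g : f =1 g -> conv A f =1 conv A g.
Proof. by move=> fg n; apply: eq_bigr => k _; rewrite fg. Qed.

Lemma conv_poly A f n N : (n < N)%N -> conv A f n = (A * \poly_(i < N) f i)`_n.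
Proof.
move=> nN; rewrite coefM; apply: eq_bigr => k _.
by rewrite coef_poly (leq_ltn_trans (leq_subr _ _) nN).
Qed.

Lemma convM A B f n : conv (A * B) f n = conv A (conv B f) n.
Proof.
rewrite (conv_poly _ _ (ltnSn n)) -mulrA coefM; apply: eq_bigr => k _.
by rewrite (@conv_poly B f _ n.+1) // ltnS leq_subr.
Qed.

Lemma conv_delta A n : conv A (fun i => (i == 0%N)%:R) n = A`_n.
Proof.
rewrite /conv big_ord_recr /= subnn eqxx mulr1 big1 ?add0r // => k _.
by rewrite subn_eq0 leqNgt ltn_ord mulr0.
Qed.

Lemma conv_sum (I : Type) (r : seq I) A (F : I -> nat -> R) n :
  conv A (fun i => \sum_(j <- r) F j i) n = \sum_(j <- r) conv A (F j) n.
Proof.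
rewrite /conv (eq_bigr (fun k : 'I_n.+1 => \sum_(j <- r) A`_k * F j (n - k)%N)).
  by rewrite exchange_big.
by move=> k _; rewrite mulr_sumr.
Qed.

Lemma conv_scale A c f n : conv A (fun i => c * f i) n = c * conv A f n.
Proof. by rewrite /conv mulr_sumr; apply: eq_bigr => k _; rewrite mulrCA. Qed.

Lemma conv_linear (w : R) f n :
  conv (w%:P - 'X) f n = if n is n'.+1 then w * f n - f n' else w * f 0%N.
Proof.
have c0 : (w%:P - 'X)`_0 = w by rewrite coefB coefC coefX subr0.
case: n => [|n]; rewrite /conv; first by rewrite big_ord1 c0.
rewrite big_ord_recl big_ord_recl big1 ?addr0.
  by rewrite c0 /= coefB coefC coefX /= sub0r mulN1r subn1.
by move=> i _; rewrite /= coefB coefC coefX /= subr0 mul0r.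
Qed.
End Convolution.

Section BinomialSeries.
Variables (F : fieldType) (w : F).
Hypothesis w_neq0 : w != 0.

(* The coefficients of 1 / (w - z) ^ (l + 1). *)
Definition binom_series (l n : nat) : F := 'C(n + l, l)%:R * w^-1 ^+ (n + l).+1.

Let mulKVw x : w * (w^-1 * x) = x.
Proof. by rewrite mulrA mulfV ?mul1r. Qed.

Lemma conv_binom_series0 n : conv (w%:P - 'X) (binom_series 0) n = (n == 0%N)%:R.
Proof.
rewrite conv_linear /binom_series; case: n => [|n] /=.
  by rewrite bin0 mul1r addn0 expr1 mulfV.
by rewrite !bin0 !mul1r !addn0 exprS mulKVw subrr.
Qed.

Lemma conv_binom_seriesS l : conv (w%:P - 'X) (binom_series l.+1) =1 binom_series l.
Proof.
move=> n; rewrite conv_linear /binom_series; case: n => [|n] /=.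
  by rewrite !add0n !binn !mul1r exprS mulKVw.
rewrite [(n.+1 + l.+1)%N]addnS addSn exprS mulrCA mulKVw.
by rewrite addnS binS natrD -mulrBl addrAC subrr add0r.
Qed.

Lemma conv_binom_series l n :
  conv ((w%:P - 'X) ^+ l.+1) (binom_series l) n = (n == 0%N)%:R.
Proof.
elim: l n => [|l IH] n; first by rewrite expr1 conv_binom_series0.
by rewrite exprSr convM -(IH n); apply: eq_conv; apply: conv_binom_seriesS.
Qed.
End BinomialSeries.

Lemma prim_root_exists (C : numClosedFieldType) n :
  (0 < n)%N -> {z : C | n.-primitive_root z}.
Proof.
pose p : {poly C} := 'X^n - 1; have [rs Dp] := closed_field_poly_normal p.
move=> n_gt0; apply/sigW; rewrite (monicP _) ?monicXnsubC // scale1r in Dp.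
have rn1 : all n.-unity_root rs by apply/allP=> z; rewrite -root_prod_XsubC -Dp.
have sz_r : (n < (size rs).+1)%N.
  by rewrite -(size_prod_XsubC rs id) -Dp size_XnsubC.
have [|z] := hasP (has_prim_root n_gt0 rn1 _ sz_r); last by exists z.
by rewrite -separable_prod_XsubC -Dp separable_Xn_sub_1 // pnatr_eq0 -lt0n.
Qed.

Lemma periodic_modn (T : Type) (f : nat -> T) D :
  (forall n, f (n + D)%N = f n) -> forall n, f (n %% D)%N = f n.
Proof.
move=> f_per n; rewrite {2}(divn_eq n D); elim: (n %/ D)%N => [|q IH].
  by rewrite mul0n add0n.
by rewrite mulSnr addnAC f_per.
Qed.

Section RootsOfUnity.
Variable F : fieldType.

Lemma unity_root_neq0 (u : F) D : (0 < D)%N -> u ^+ D = 1 -> u != 0.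
Proof.
move=> D_gt0 uD; apply: contra_eq_neq uD => ->.
by rewrite expr0n gtn_eqF // eq_sym oner_eq0.
Qed.

Lemma sum_unity_root_expr (x : F) D : x ^+ D = 1 -> x != 1 -> \sum_(i < D) x ^+ i = 0.
Proof.
move=> xD x1; have := subrX1 x D; rewrite xD subrr => /esym/eqP.
by rewrite mulf_eq0 subr_eq0 (negbTE x1) => /eqP.
Qed.

Definition dft (D : nat) (f : nat -> F) (w : F) := D%:R^-1 * \sum_(v < D) w ^+ v * f v.

Variables (D : nat) (z : F).
Hypothesis z_prim : D.-primitive_root z.

Lemma sum_prim_root_ratio v n :
  \sum_(i < D) (z ^+ v / z ^+ n) ^+ i = if v == n %[mod D] then D%:R else 0.
Proof.
have zn_neq0 : z ^+ n != 0.
  by rewrite expf_neq0 // (prim_root_eq0 z_prim) -lt0n (prim_order_gt0 z_prim).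
have x_eq1 : (z ^+ v / z ^+ n == 1) = (z ^+ v == z ^+ n).
  by apply/eqP/eqP => [/divr1_eq | ->]; last exact: divff.
rewrite -(eq_prim_root_expr z_prim) -x_eq1; case: eqP => [-> | /eqP x_neq1].
  by rewrite (eq_bigr (fun _ => 1)) ?sumr_const ?card_ord // => i _; rewrite expr1n.
apply: sum_unity_root_expr x_neq1.
rewrite exprMn exprVn -!exprM mulnC [(n * D)%N]mulnC !exprM.
by rewrite (prim_expr_order z_prim) !expr1n divr1.
Qed.

Lemma dft_inversion (f : nat -> F) : (forall n, f (n + D)%N = f n) ->
  forall n, \sum_(i < D) dft D f (z ^+ i) * (z ^+ i)^-1 ^+ n = f n.
Proof.
move=> f_per n; have D_gt0 := prim_order_gt0 z_prim.
transitivity (D%:R^-1 * \sum_(v < D) f v * \sum_(i < D) (z ^+ v / z ^+ n) ^+ i).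
  rewrite (eq_bigr (fun i : 'I_D =>
    D%:R^-1 * \sum_(v < D) f v * (z ^+ v / z ^+ n) ^+ i)).
    rewrite -mulr_sumr exchange_big /=; congr (_ * _).
    by apply: eq_bigr => v _; rewrite mulr_sumr.
  move=> i _; rewrite /dft -mulrA mulr_suml; congr (_ * _); apply: eq_bigr => v _.
  by rewrite exprMn !exprVn -!exprM mulnC [(n * i)%N]mulnC mulrAC mulrC.
rewrite (eq_bigr (fun v : 'I_D =>
  if v == (n %% D)%N :> nat then f v * D%:R else 0)); last first.
  by move=> v _; rewrite sum_prim_root_ratio modn_small //; case: eqP; rewrite ?mulr0.
rewrite -big_mkcond (big_ord1_eq _ (fun v => f v * D%:R)) ltn_pmod // periodic_modn //.
by rewrite mulrC mulfK // (prim_root_natf_neq0 z_prim).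
Qed.
End RootsOfUnity.

Definition unity_cofactor (R : nzRingType) (w : R) D : {poly R} :=
  \sum_(i < D) w%:P ^+ (D.-1 - i) * 'X ^+ i.

Lemma unity_cofactorE (R : comNzRingType) (w : R) D :
  w ^+ D = 1 -> (w%:P - 'X) * unity_cofactor w D = 1 - 'X^D.
Proof. by move=> wD; rewrite /unity_cofactor -subrXX -polyC_exp wD. Qed.

Lemma unity_cofactor_root (F : numFieldType) (w : F) D :
  (0 < D)%N -> w ^+ D = 1 -> (unity_cofactor w D).[w] != 0.
Proof.
move=> D_gt0 wD; rewrite /unity_cofactor horner_sum.
rewrite (eq_bigr (fun _ => w ^+ D.-1)); last first.
  move=> i _; rewrite hornerM hornerXn horner_exp hornerC -exprD subnK //.
  by rewrite -ltnS prednK.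
rewrite sumr_const card_ord -mulr_natr mulf_neq0 ?pnatr_eq0 -?lt0n //.
by rewrite expf_neq0 // (unity_root_neq0 D_gt0).
Qed.

(** * Uniqueness of partial fraction expansions *)

Lemma poly_eval_eq0 (F : numDomainType) (p : {poly F}) : (forall x, p.[x] = 0) -> p = 0.
Proof.
move=> p0; apply/eqP; apply: contraT => p_neq0.
have := max_poly_roots p_neq0 (rs := [seq i%:R | i <- iota 0 (size p)]).
rewrite size_map size_iota ltnn; apply.
  by apply/allP => z /mapP[i _ ->]; apply/rootP.
by rewrite map_inj_uniq ?iota_uniq // => i j /eqP; rewrite eqr_nat => /eqP.
Qed.

Lemma dvdp_sum (R : idomainType) (I : Type) (r : seq I) (P : pred I)
    (E : I -> {poly R}) q :
  (forall i, P i -> q %| E i) -> q %| \sum_(i <- r | P i) E i.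
Proof.
move=> qE; apply: (big_ind (fun x => q %| x)); first by rewrite dvdp0.
  by move=> x y; apply: dvdp_add.
exact: qE.
Qed.

Section PartialFractions.
Variable F : numFieldType.
Implicit Types (S : seq F) (u x : F) (a b : F -> nat -> F) (c : nat -> F).

Lemma comp_polyCsubX u : (u%:P - 'X) \Po (u%:P - 'X) = 'X.
Proof. by rewrite comp_polyB comp_polyC comp_polyX opprB addrC subrK. Qed.

Lemma pfrac_part_comp u N c :
  (\sum_(l < N) c l *: (u%:P - 'X) ^+ (N - l.+1)) \Po (u%:P - 'X) =
  \poly_(i < N) c (N - i.+1)%N.
Proof.
rewrite raddf_sum poly_def [RHS](reindex_inj rev_ord_inj) /=.
apply: eq_bigr => i _; rewrite comp_polyZ rmorphXn /= comp_polyCsubX.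
by have -> : (N - (N - i.+1).+1)%N = i by have := ltn_ord i; lia.
Qed.

Lemma pfrac_part_eq0 u N c :
  (u%:P - 'X) ^+ N %| \sum_(l < N) c l *: (u%:P - 'X) ^+ (N - l.+1) ->
  forall l, (l < N)%N -> c l = 0.
Proof.
move=> /(dvdp_comp_poly (u%:P - 'X)).
rewrite pfrac_part_comp rmorphXn /= comp_polyCsubX => dvdXN.
have poly0 : \poly_(i < N) c (N - i.+1)%N = 0.
  apply/eqP; apply: contraT => /dvdp_leq/(_ dvdXN).
  by rewrite size_polyXn ltnNge size_poly.
move=> l lN; have := congr1 (fun q : {poly F} => q`_(N - l.+1)%N) poly0.
rewrite coef_poly coef0 ifT; last by lia.
by have -> : (N - (N - l.+1).+1)%N = l by lia.
Qed.

Definition pfrac_cofactor S N u : {poly F} := \prod_(v <- S | v != u) (v%:P - 'X) ^+ N.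

Definition pfrac_numerator S N a : {poly F} :=
  \sum_(u <- S)
    (\sum_(l < N) a u l *: (u%:P - 'X) ^+ (N - l.+1)) * pfrac_cofactor S N u.

Lemma horner_pfrac_numerator S N a x : uniq S -> \prod_(u <- S) (u - x) ^+ N != 0 ->
  (pfrac_numerator S N a).[x] =
  (\sum_(u <- S) \sum_(l < N) a u l / (u - x) ^+ l.+1) * \prod_(u <- S) (u - x) ^+ N.
Proof.
move=> S_uniq W_neq0; rewrite mulr_suml horner_sum; apply: eq_big_seq => u uS.
move: W_neq0; rewrite (bigD1_seq u) //= mulf_eq0 negb_or => /andP[ux_neq0 _].
rewrite hornerM horner_sum /pfrac_cofactor horner_prod !mulr_suml.
apply: eq_bigr => l _; have ux : u - x != 0.
  apply: contraNneq ux_neq0 => ->.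
  by rewrite expr0n gtn_eqF // (leq_ltn_trans _ (ltn_ord l)).
rewrite hornerZ !horner_exp !hornerE.
rewrite (expfB_cond (m := N) (n := l.+1)) ?(negbTE ux) ?add0n //.
rewrite (eq_bigr (fun v => (v - x) ^+ N)) => [|v _]; last first.
  by rewrite horner_exp !hornerE.
by rewrite /= !mulrA; congr (_ * _); apply: mulrAC.
Qed.

Lemma pfrac_numerator_eq0 S N a (B : {poly F}) : uniq S -> B != 0 ->
  (forall x, B.[x] != 0 -> \sum_(u <- S) \sum_(l < N) a u l / (u - x) ^+ l.+1 = 0) ->
  pfrac_numerator S N a = 0.
Proof.
move=> S_uniq B_neq0 pfrac0; pose W := \prod_(u <- S) (u%:P - 'X) ^+ N.
have hornerW x : W.[x] = \prod_(u <- S) (u - x) ^+ N.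
  by rewrite horner_prod; apply: eq_bigr => u _; rewrite horner_exp !hornerE.
have W_neq0 : W != 0.
  rewrite prodf_seq_neq0; apply/allP => u _.
  by rewrite expf_neq0 // -opprB oppr_eq0 -size_poly_eq0 size_XsubC.
suff /eqP : pfrac_numerator S N a * (B * W) = 0.
  by rewrite mulf_eq0 mulf_eq0 (negbTE B_neq0) (negbTE W_neq0) !orbF => /eqP.
apply: poly_eval_eq0 => x; rewrite hornerM.
have [BWx0 | ] := eqVneq (B * W).[x] 0; first by rewrite BWx0 mulr0.
rewrite hornerM mulf_eq0 negb_or hornerW => /andP[Bx Wx].
by rewrite horner_pfrac_numerator // pfrac0 // !mul0r.
Qed.

Lemma pfrac_numerator_coef S N a : uniq S -> pfrac_numerator S N a = 0 ->
  forall u l, u \in S -> (l < N)%N -> a u l = 0.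
Proof.
move=> S_uniq num0 u l uS; apply: (pfrac_part_eq0 (u := u)).
have cop : coprimep ((u%:P - 'X) ^+ N) (pfrac_cofactor S N u).
  apply: coprimep_expl; rewrite -opprB -scaleN1r coprimepZl ?oppr_eq0 ?oner_eq0 //.
  rewrite coprimep_sym coprimep_XsubC /root /pfrac_cofactor horner_prod prodf_seq_neq0.
  apply/allP => v _; apply/implyP => vu.
  by rewrite horner_exp !hornerE expf_neq0 // subr_eq0.
rewrite -(Gauss_dvdpl _ cop).
move: num0; rewrite /pfrac_numerator (bigD1_seq u) //= => /eqP.
rewrite addr_eq0 => /eqP ->.
rewrite dvdpNr; apply: dvdp_sum => v vu; apply: dvdp_mull.
by rewrite /pfrac_cofactor big_mkcond (bigD1_seq u) //= eq_sym vu dvdp_mulr.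
Qed.

Lemma eq_pfrac (s1 s2 : seq F) N a b (B : {poly F}) :
  uniq s1 -> uniq s2 -> B != 0 ->
  (forall x, B.[x] != 0 ->
     \sum_(u <- s1) \sum_(l < N) a u l / (u - x) ^+ l.+1 =
     \sum_(u <- s2) \sum_(l < N) b u l / (u - x) ^+ l.+1) ->
  forall u l, u \in s1 -> u \in s2 -> (l < N)%N -> a u l = b u l.
Proof.
move=> s1_uniq s2_uniq B_neq0 eq_s12 u l us1 us2 lN.
pose S := undup (s1 ++ s2).
pose c v k := (if v \in s1 then a v k else 0) - (if v \in s2 then b v k else 0).
have sum_sub (s : seq F) (G : F -> F) : uniq s -> {subset s <= S} ->
    \sum_(v <- S) (if v \in s then G v else 0) = \sum_(v <- s) G v.
  move=> s_uniq sS; rewrite -big_mkcond -big_filter; apply: perm_big.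
  apply: uniq_perm; rewrite ?filter_uniq ?undup_uniq // => v.
  by rewrite mem_filter andb_idr //; apply: sS.
have s1S : {subset s1 <= S} by move=> v vs; rewrite mem_undup mem_cat vs.
have s2S : {subset s2 <= S} by move=> v vs; rewrite mem_undup mem_cat vs orbT.
have sum_c x : \sum_(v <- S) \sum_(k < N) c v k / (v - x) ^+ k.+1 =
    \sum_(v <- s1) \sum_(k < N) a v k / (v - x) ^+ k.+1 -
    \sum_(v <- s2) \sum_(k < N) b v k / (v - x) ^+ k.+1.
  rewrite -(sum_sub s1) // -(sum_sub s2) // -sumrB; apply: eq_bigr => v _.
  rewrite /c (eq_bigr _ (fun k _ => mulrBl _ _ _)) sumrB.
  by congr (_ - _); case: (_ \in _); rewrite // big1 // => k _; rewrite mul0r.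
have num0 : pfrac_numerator S N c = 0.
  apply: (pfrac_numerator_eq0 (undup_uniq _) B_neq0) => x Bx.
  by rewrite sum_c eq_s12 // subrr.
have := pfrac_numerator_coef (undup_uniq _) num0 (s1S _ us1) lN.
by rewrite /c us1 us2 => /eqP; rewrite subr_eq0 => /eqP.
Qed.
End PartialFractions.

(** * The generating function of a quasi-polynomial *)

Section PfracCoef.
Variables (F : numFieldType) (D : nat) (d : nat -> nat -> F).

(* The right-hand side of the formula for c_{w,m}, with the sum over l cut at N. *)
Definition pfrac_coef (N : nat) (w : F) (m : nat) : F :=
  w ^+ m * ((m.-1)`!)%:R *
  \sum_(m <= l < N.+1) (-1) ^+ (l - m) * (stirling2 l m)%:R * dft D (d l.-1) w.

Lemma sum_pfrac_coef_binom_series r (w : F) n : w != 0 ->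
  \sum_(l < r) pfrac_coef r w l.+1 * binom_series w l n =
  \sum_(k < r) dft D (d k) w * w^-1 ^+ n * n%:R ^+ k.
Proof.
move=> w0.
have wK l : w ^+ l.+1 * w^-1 ^+ (n + l).+1 = w^-1 ^+ n.
  by rewrite -addnS exprD mulrCA [w^-1 ^+ l.+1]exprVn mulfV ?expf_neq0 // mulr1.
have ffactE l : ((l`!)%:R * ('C(n + l, l))%:R : F) = ((n + l) ^_ l)%:R.
  by rewrite -bin_ffact natrM mulrC.
pose G l j := w ^+ l.+1 * (l`!)%:R *
  ((-1) ^+ (j - l.+1) * (stirling2 j l.+1)%:R * dft D (d j.-1) w) *
  ('C(n + l, l)%:R * w^-1 ^+ (n + l).+1).
rewrite (eq_bigr (fun l : 'I_r => \sum_(l.+1 <= j < r.+1) G l j)); last first.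
  by move=> l _; rewrite /pfrac_coef mulr_sumr mulr_suml.
rewrite triangular_exchange; apply: eq_bigr => k _.
rewrite natrX_stirling2 !mulr_sumr; apply: eq_bigr => l _.
by rewrite /G subSS -ffactE -(wK l); ring.
Qed.

Lemma pfrac_coef_head r (w : F) l : (l <= r)%N ->
  pfrac_coef r w l = w ^+ l * ((l.-1)`!)%:R *
  (dft D (d l.-1) w +
   \sum_(l.+1 <= j < r.+1) (-1) ^+ (j - l) * (stirling2 j l)%:R * dft D (d j.-1) w).
Proof.
by move=> lr; rewrite /pfrac_coef big_ltn ?ltnS // subnn stirling2nn expr0 !mul1r.
Qed.

Lemma dft_eq0_above r (w : F) N : w != 0 ->
  (forall l, (N < l <= r)%N -> pfrac_coef r w l = 0) ->
  forall l, (N < l <= r)%N -> dft D (d l.-1) w = 0.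
Proof.
move=> w0 pf0 l; move Ek : (r - l)%N => k.
elim/ltn_ind: k l Ek => k IH l Ek /andP[Nl lr].
have := pf0 l; rewrite Nl lr => /(_ isT).
rewrite (pfrac_coef_head _ lr) big_nat_cond big1 ?addr0 => [|j /andP[/andP[lj jr] _]].
  move/eqP; rewrite mulf_eq0 => /orP[|/eqP //].
  by rewrite mulf_eq0 expf_eq0 (negbTE w0) andbF pnatr_eq0 (gtn_eqF (fact_gt0 _)).
rewrite (IH (r - j)%N) ?mulr0 // ?(ltn_trans Nl lj) //.
by rewrite -Ek ltn_sub2l // (leq_trans lj).
Qed.

Lemma pfrac_coef_trunc r (w : F) N m : w != 0 -> (N <= r)%N -> (m <= N)%N ->
  (forall l, (N < l <= r)%N -> pfrac_coef r w l = 0) ->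
  pfrac_coef r w m = pfrac_coef N w m.
Proof.
move=> w0 Nr mN pf0; rewrite /pfrac_coef (@big_cat_nat _ _ _ N.+1) ?ltnS ?(leqW mN) //=.
congr (_ * _); rewrite [X in _ + X]big_nat_cond [X in _ + X]big1 ?addr0 //.
move=> l /andP[/andP[Nl lr] _].
by rewrite (dft_eq0_above w0 pf0) ?mulr0 // Nl -ltnS lr.
Qed.
End PfracCoef.

Section QuasiPolynomial.
Variables (F : numFieldType) (D r : nat) (d : nat -> nat -> F) (z : F).
Hypotheses (z_prim : D.-primitive_root z)
           (d_periodic : forall k n, d k (n + D)%N = d k n).

Let D_gt0 := prim_order_gt0 z_prim.

Definition unity_roots : seq F := [seq z ^+ i | i <- iota 0 D].

Lemma unity_roots_uniq : uniq unity_roots.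
Proof.
rewrite map_inj_in_uniq ?iota_uniq // => i j; rewrite !mem_iota !add0n.
move=> /andP[_ iD] /andP[_ jD] /eqP.
by rewrite (eq_prim_root_expr z_prim) !modn_small // => /eqP.
Qed.

Lemma mem_unity_roots u : (u \in unity_roots) = (u ^+ D == 1).
Proof.
apply/mapP/eqP => [[i _ ->] | /(prim_rootP z_prim)[i ->]].
  by rewrite exprAC (prim_expr_order z_prim) expr1n.
by exists (val i); rewrite // mem_iota ltn_ord.
Qed.

Lemma big_unity_roots (G : F -> F) :
  \sum_(w <- unity_roots) G w = \sum_(i < D) G (z ^+ i).
Proof. by rewrite big_map -(subn0 D) -/(index_iota 0 D) big_mkord subn0. Qed.

Lemma quasi_poly_expand n :
  \sum_(k < r) d k n * n%:R ^+ k =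
  \sum_(w <- unity_roots) \sum_(l < r) pfrac_coef D d r w l.+1 * binom_series w l n.
Proof.
rewrite big_unity_roots (eq_bigr (fun i : 'I_D =>
  \sum_(k < r) dft D (d k) (z ^+ i) * (z ^+ i)^-1 ^+ n * n%:R ^+ k)); last first.
  move=> i _; rewrite sum_pfrac_coef_binom_series // (unity_root_neq0 D_gt0) //.
  by rewrite exprAC (prim_expr_order z_prim) expr1n.
rewrite exchange_big; apply: eq_bigr => k _ /=.
by rewrite -mulr_suml dft_inversion.
Qed.

Definition quasi_den : {poly F} := (1 - 'X^D) ^+ r.

Definition quasi_num : {poly F} :=
  \sum_(w <- unity_roots) \sum_(l < r)
    pfrac_coef D d r w l.+1 *:
      ((w%:P - 'X) ^+ (r - l.+1) * unity_cofactor w D ^+ r).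

Lemma quasi_den_factor (w : F) l : w ^+ D = 1 -> (l < r)%N ->
  quasi_den =
  (w%:P - 'X) ^+ (r - l.+1) * unity_cofactor w D ^+ r * (w%:P - 'X) ^+ l.+1.
Proof. by move=> wD lr; rewrite mulrAC -exprD subnK // -exprMn unity_cofactorE. Qed.

Lemma coef_quasi_num n :
  quasi_num`_n = conv quasi_den (fun n => \sum_(k < r) d k n * n%:R ^+ k) n.
Proof.
rewrite (eq_conv _ quasi_poly_expand) conv_sum coef_sum; apply: eq_big_seq => w.
rewrite mem_unity_roots => /eqP wD; rewrite conv_sum coef_sum; apply: eq_bigr => l _.
rewrite conv_scale coefZ (quasi_den_factor wD (ltn_ord l)) convM.
by rewrite (eq_conv _ (conv_binom_series (unity_root_neq0 D_gt0 wD) l)) conv_delta.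
Qed.

Lemma horner_quasi_num x : quasi_den.[x] != 0 ->
  quasi_num.[x] / quasi_den.[x] =
  \sum_(w <- unity_roots) \sum_(l < r) pfrac_coef D d r w l.+1 / (w - x) ^+ l.+1.
Proof.
move=> Qx; rewrite horner_sum mulr_suml; apply: eq_big_seq => w.
rewrite mem_unity_roots => /eqP wD; rewrite horner_sum mulr_suml.
apply: eq_bigr => l _; rewrite hornerZ -mulrA; congr (_ * _).
move: Qx; rewrite (quasi_den_factor wD (ltn_ord l)) hornerM mulf_eq0 negb_or.
case/andP=> Gx _; rewrite hornerM invfM mulrA -hornerM mulfV // mul1r.
by rewrite horner_exp !hornerE.
Qed.

Lemma quasi_den_neq0 : quasi_den != 0.
Proof.
apply: contra_neq (@oner_neq0 F) => /(congr1 (horner^~ 0)).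
by rewrite horner_exp !hornerE expr0n gtn_eqF // subr0 expr1n.
Qed.

Lemma mup_quasi_den u : u ^+ D = 1 -> mup u quasi_den = r.
Proof.
move=> uD.
have -> : quasi_den = ('X - u%:P) ^+ r * ((-1) ^+ r * unity_cofactor u D ^+ r).
  by rewrite /quasi_den -(unity_cofactorE uD) mulrA -!exprMn mulrN1 opprB.
rewrite mupMl ?mup_XsubCX ?eqxx // /root hornerM !horner_exp !hornerE.
rewrite mulf_neq0 ?expf_neq0 ?oppr_eq0 ?oner_eq0 //.
exact: unity_cofactor_root D_gt0 uD.
Qed.

Section GeneratingFunction.
Variables (p : nat -> F) (L M : {poly F}).
Hypotheses (p_def : forall n, p n = \sum_(k < r) d k n * n%:R ^+ k)
           (gf_def : forall n, conv M p n = L`_n) (LM_coprime : coprimep L M).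

Lemma gf_cross : M * quasi_num = L * quasi_den.
Proof.
have Mp : conv M (fun n => \sum_(k < r) d k n * n%:R ^+ k) =1 (fun n => L`_n).
  by move=> n; rewrite -gf_def; apply: eq_conv => k; rewrite p_def.
apply/polyP => n; rewrite -conv_coefM (eq_conv _ coef_quasi_num) -convM mulrC convM.
by rewrite (eq_conv _ Mp) conv_coefM mulrC.
Qed.

Lemma gf_den_neq0 : M != 0.
Proof.
apply: contraTneq LM_coprime => M0.
have -> : L = 0.
  apply/polyP => n; rewrite -gf_def M0 coef0 /conv big1 // => k _.
  by rewrite coef0 mul0r.
by rewrite M0 coprimep0 eqp01.
Qed.

Lemma dvdp_gf_den : M %| quasi_den.
Proof.
have : M %| quasi_den * L by rewrite mulrC -gf_cross dvdp_mulr.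
by rewrite Gauss_dvdpl // coprimep_sym.
Qed.

Lemma root_gf_den u : root M u -> u ^+ D = 1.
Proof.
move/(root_dvdp dvdp_gf_den); rewrite /root horner_exp !hornerE expf_eq0 subr_eq0.
by case/andP=> _ /eqP <-.
Qed.

Lemma mup_gf_den u : root M u -> (mup u M <= r)%N.
Proof.
move=> Mu; rewrite -(mup_quasi_den (root_gf_den Mu)) mup_geq ?quasi_den_neq0 //.
by apply: dvdp_trans dvdp_gf_den; rewrite -mup_geq ?gf_den_neq0.
Qed.

Variables (s : seq F) (c : F -> nat -> F).
Hypotheses (s_uniq : uniq s) (s_roots : forall x, root M x = (x \in s))
  (pfrac_def : forall x, M.[x] != 0 ->
     L.[x] / M.[x] =
     \sum_(u <- s) \sum_(1 <= l < (mup u M).+1) c u l / (u - x) ^+ l).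

Lemma pfrac_coef_gf u l : root M u -> (l < r)%N ->
  (if (l < mup u M)%N then c u l.+1 else 0) = pfrac_coef D d r u l.+1.
Proof.
move=> Mu lr; have MQ_neq0 := mulf_neq0 gf_den_neq0 quasi_den_neq0.
pose a v k := if (k < mup v M)%N then c v k.+1 else 0.
apply: (eq_pfrac (a := a) (b := fun v k => pfrac_coef D d r v k.+1)
  s_uniq unity_roots_uniq MQ_neq0 _ _ _ lr).
- move=> x; rewrite hornerM mulf_eq0 negb_or => /andP[Mx Qx].
  rewrite -horner_quasi_num //.
  have -> : quasi_num.[x] / quasi_den.[x] = L.[x] / M.[x].
    by apply/eqP; rewrite eqr_div // -!hornerM mulrC gf_cross.
  rewrite pfrac_def //; apply: eq_big_seq => v; rewrite -s_roots => Mv.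
  rewrite big_add1 /= big_mkord.
  rewrite (big_ord_widen r (fun k => c v k.+1 / (v - x) ^+ k.+1) (mup_gf_den Mv)).
  rewrite [RHS]big_mkcond; apply: eq_bigr => k _.
  by rewrite /a; case: ifP; rewrite ?mul0r.
- by rewrite -s_roots.
- by rewrite mem_unity_roots (root_gf_den Mu).
Qed.

Lemma gf_pfrac_coefE u m : root M u -> (0 < m <= mup u M)%N ->
  c u m = pfrac_coef D d (mup u M) u m.
Proof.
move=> Mu /andP[m_gt0 m_le]; have mup_le := mup_gf_den Mu.
rewrite -(pfrac_coef_trunc (unity_root_neq0 D_gt0 (root_gf_den Mu)) mup_le m_le).
  have := pfrac_coef_gf (l := m.-1) Mu; rewrite prednK // m_le.
  by apply; apply: leq_trans m_le mup_le.
move=> l /andP[mup_l l_r]; have l_gt0 := leq_ltn_trans (leq0n _) mup_l.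
have := pfrac_coef_gf (l := l.-1) Mu.
by rewrite prednK // [(l <= mup u M)%N]leqNgt mup_l => /(_ l_r) <-.
Qed.
End GeneratingFunction.
End QuasiPolynomial.

Theorem proposition3p2
  (C : numClosedFieldType) (D r : nat) (d : nat -> nat -> C) (p : nat -> C)
  (L M : {poly C}) (s : seq C) (c : C -> nat -> C) (gamma : C)
  (m : nat) :
  (0 < D)%N -> (0 < r)%N ->
  (* each d_k is periodic with period D *)
  (forall k n, d k (n + D)%N = d k n) ->
  (* d_{r-1} is not identically zero *)
  (exists n, d r.-1 n != 0) ->
  (* p is the quasi-polynomial *)
  (forall n, p n = \sum_(k < r) d k n * (n%:R) ^+ k) ->
  (* sum_n p(n) z^n = L/M as formal power series, i.e. M * P = L *)
  (forall n, \sum_(k < n.+1) M`_k * p (n - k)%N = L`_n) ->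
  (* lowest terms *)
  coprimep L M ->
  (* s enumerates the distinct roots of M *)
  uniq s -> (forall x, root M x = (x \in s)) ->
  (* partial fraction decomposition *)
  (forall z, M.[z] != 0 ->
     L.[z] / M.[z] =
     \sum_(lam <- s) \sum_(1 <= l < (mup lam M).+1) c lam l / (lam - z) ^+ l) ->
  root M gamma ->
  (1 <= m <= mup gamma M)%N ->
  c gamma m =
    gamma ^+ m * ((m.-1)`!)%:R *
    \sum_(m <= l < (mup gamma M).+1)
       (-1) ^+ (l - m) * (stirling2 l m)%:R *
       ((D%:R)^-1 * \sum_(v < D) gamma ^+ v * d l.-1 v).
Proof.
move=> D_gt0 _ d_per _ p_def gf_def LM_coprime s_uniq s_roots pfrac_def gM m_range.
have [z z_prim] := prim_root_exists C D_gt0.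
exact: (gf_pfrac_coefE z_prim d_per p_def gf_def LM_coprime s_uniq s_roots pfrac_def).
Qed.
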